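(* Let $g,h\in G(\Gamma)$ and $d=|h^{-1}g|_r$. Then every syllable of (a reduced word for) $h^{-1}g$ is either a syllable from the $d$-tail of $g$, or the inverse of a syllable from the $d$-tail of $h$, or a product $h_i^{-1}g_j$ of a syllable $h_i$ of the $d$-tail of $h$ and a syllable $g_j$ of the $d$-tail of $g$ lying in the same vertex group.
   Context: $G(\Gamma)$ is the graph product of groups $\{G_v\}_{v\in\Gamma}$ over a finite simplicial graph $\Gamma$. Reduced words are words $(g_1,\dots,g_n)$, $g_i\in G_{v_i}$, that cannot be shortened by swapping consecutive syllables from adjacent vertex groups, merging consecutive syllables from the same vertex group, or deleting identity syllables; reduced words for the same element differ by such swaps and have the same multiset of syllables; $|g|_r$ is the length of a reduced word for $g$. The $d$-tail of $g\in G(\Gamma)$ is the set of syllables of $g$ which occur among the last $d$ syllables of some reduced word representing $g$. *)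

From Stdlib Require Import Relations.
From Stdlib Require List.
From mathcomp Require Import all_boot.
Set Implicit Arguments. Unset Strict Implicit. Unset Printing Implicit Defensive.

Record grp := Grp {
  gcar :> Type;
  gmul : gcar -> gcar -> gcar;
  ginv : gcar -> gcar;
  gone : gcar;
  gmulA : forall x y z, gmul x (gmul y z) = gmul (gmul x y) z;
  gmul1 : forall x, gmul gone x = x;
  gmulV : forall x, gmul (ginv x) x = gone
}.

Section GraphProduct.
(* Finite simplicial graph Gamma: vertex set V (finite), adjacency e
   (symmetry/irreflexivity are hypotheses of the main theorem). *)
Variables (V : finType) (e : rel V) (G : V -> grp).

Definition syll := {v : V & G v}.
Definition word := seq syll.

Definition syll_inv (s : syll) : syll :=
  existT _ (projT1 s) (ginv (projT2 s)).

Definition word_inv (w : word) : word := rev (map syll_inv w).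

Inductive swap_move : word -> word -> Prop :=
| SwapM (u w : word) (v1 v2 : V) (a : G v1) (b : G v2) :
    e v1 v2 ->
    swap_move (u ++ existT _ v1 a :: existT _ v2 b :: w)
              (u ++ existT _ v2 b :: existT _ v1 a :: w).

Inductive merge_move : word -> word -> Prop :=
| MergeM (u w : word) (v : V) (a b : G v) :
    merge_move (u ++ existT _ v a :: existT _ v b :: w)
               (u ++ existT _ v (gmul a b) :: w).

Inductive delete_move : word -> word -> Prop :=
| DeleteM (u w : word) (v : V) :
    delete_move (u ++ existT _ v (gone (G v)) :: w) (u ++ w).

Definition move (w1 w2 : word) : Prop :=
  swap_move w1 w2 \/ merge_move w1 w2 \/ delete_move w1 w2.

(* Two words represent the same element of the graph product G(Gamma)
   iff they are related by the equivalence closure of the moves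
   (this is the standard presentation of G(Gamma) on syllables). *)
Definition wequiv : word -> word -> Prop := clos_refl_sym_trans word move.

Definition reduced (w : word) : Prop :=
  forall w', clos_refl_trans word move w w' -> size w <= size w'.

Definition reduced_for (g r : word) : Prop := reduced r /\ wequiv r g.

Definition tail (d : nat) (g : word) (s : syll) : Prop :=
  exists r, reduced_for g r /\ List.In s (drop (size r - d) r).

End GraphProduct.

From Stdlib Require Import Relations ClassicalEpsilon.
From Stdlib Require List.
From mathcomp Require Import all_boot zify.
Set Implicit Arguments. Unset Strict Implicit. Unset Printing Implicit Defensive.

(* A syllable [s] acts on a reduced word by sliding past the syllables of
   adjacent vertex groups and merging with the first syllable of its own vertex
   group, or by staying in front if it gets blocked.  Up to swaps, this action is
   compatible with all moves, so reduced words are exactly the fixed points of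
   the resulting normal form, and reduced words for the same element differ by
   swaps only.
   Letting the inverse of a reduced [h] act on a reduced [g], one syllable at a
   time, preserves the following shape: up to swaps [g = x P y], [h = x Q z] and
   [h^-1 g = z^-1 (Q^-1 P) y], where [P_i] and [Q_i] lie in the same vertex
   group and these vertex groups are pairwise adjacent.  The reduced word for
   [h^-1 g] thus has length [d = |z| + |P| + |y|], so [Q z] and [P y] are
   suffixes of length at most [d] of reduced words for [h] and [g]. *)

Section GroupLemmas.
Variable Gr : grp.
Local Notation "x * y" := (gmul x y).
Local Notation "1" := (gone Gr).

Lemma gmulxV (x : Gr) : x * ginv x = 1.
Proof.
have -> : x * ginv x = (ginv (ginv x) * ginv x) * (x * ginv x) by rewrite gmulV gmul1.
by rewrite -gmulA (gmulA (ginv x)) gmulV gmul1 gmulV.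
Qed.

Lemma gmulx1 (x : Gr) : x * 1 = x.
Proof. by rewrite -(gmulV x) gmulA gmulxV gmul1. Qed.

Lemma ginv_uniq (y z : Gr) : y * z = 1 -> y = ginv z.
Proof. by move=> yz1; rewrite -(gmulx1 y) -(gmulxV z) gmulA yz1 gmul1. Qed.

Lemma ginvK (x : Gr) : ginv (ginv x) = x.
Proof. by symmetry; apply: ginv_uniq; rewrite gmulxV. Qed.

Lemma ginvM (x y : Gr) : ginv (x * y) = ginv y * ginv x.
Proof.
by symmetry; apply: ginv_uniq; rewrite -gmulA (gmulA (ginv x)) gmulV gmul1 gmulV.
Qed.

Lemma ginv1 : ginv 1 = 1.
Proof. by symmetry; apply: ginv_uniq; rewrite gmul1. Qed.

Lemma ginv_eq1 (x : Gr) : ginv x = 1 -> x = 1.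
Proof. by move=> x'1; rewrite -(ginvK x) x'1 ginv1. Qed.

Lemma gmulV_eq1 (a b : Gr) : ginv a * b = 1 -> b = a.
Proof. by move=> /ginv_uniq ab; rewrite -(ginvK b) -ab ginvK. Qed.

End GroupLemmas.

Lemma map_eq_cat_cons (A B : Type) (f : A -> B) (s : seq A) b1 y b2 :
  map f s = b1 ++ y :: b2 ->
  exists s1 x s2, [/\ s = s1 ++ x :: s2, b1 = map f s1, y = f x & b2 = map f s2].
Proof.
elim: b1 s => [|b b1 IHb] [|x s] //= [xb fs]; first by exists [::], x, s.
have [s1 [x' [s2 [-> -> -> ->]]]] := IHb _ fs.
by exists (x :: s1), x', s2; rewrite -xb.
Qed.

Section GraphProductWords.
Variables (V : finType) (e : rel V) (G : V -> grp).
Hypotheses (e_sym : symmetric e) (e_irr : irreflexive e).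

Local Notation syl := (syll G).
Local Notation wrd := (word G).
Definition swaps : wrd -> wrd -> Prop := clos_refl_trans wrd (@swap_move V e G).
Definition moves : wrd -> wrd -> Prop := clos_refl_trans wrd (@move V e G).

Definition svert (s : syl) : V := projT1 s.

Definition syll_trivial (s : syl) : Prop := projT2 s = gone (G (projT1 s)).

Definition syll_trivialb (s : syl) : bool :=
  if excluded_middle_informative (syll_trivial s) then true else false.

Lemma syll_trivialP s : reflect (syll_trivial s) (syll_trivialb s).
Proof. by rewrite /syll_trivialb; case: excluded_middle_informative; constructor. Qed.

(* Junk value: when [t] is not in the vertex group of [s], the result is [s]. *)
Definition syll_mul (s t : syl) : syl :=
  let: existT v a := s in let: existT u b := t in
  match u =P v with
  | ReflectT uv => existT _ v (gmul a (eq_rect u (fun w => G w) b v uv))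
  | ReflectF _ => existT _ v a
  end.

Lemma syll_mulE v (a b : G v) :
  syll_mul (existT _ v a) (existT _ v b) = existT _ v (gmul a b).
Proof. by rewrite /syll_mul; case: eqP => // vv; rewrite (eq_irrelevance vv erefl). Qed.

Lemma svert_syll_mul s t : svert (syll_mul s t) = svert s.
Proof. by case: s => v a; case: t => u b /=; case: eqP. Qed.

Definition merge_syll (s t : syl) : wrd :=
  if syll_trivialb (syll_mul s t) then [::] else [:: syll_mul s t].

Lemma merge_syll_cases s t : merge_syll s t = [::] \/
  merge_syll s t = [:: syll_mul s t] /\ ~ syll_trivial (syll_mul s t).
Proof. by rewrite /merge_syll; case: syll_trivialP; auto. Qed.

Lemma merge_syll_trivial v (a b : G v) : gmul a b = gone _ ->
  merge_syll (existT _ v a) (existT _ v b) = [::].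
Proof. by rewrite /merge_syll syll_mulE; case: syll_trivialP. Qed.

Lemma merge_syll_nontrivial v (a b : G v) : gmul a b <> gone _ ->
  merge_syll (existT _ v a) (existT _ v b) = [:: existT _ v (gmul a b)].
Proof. by rewrite /merge_syll syll_mulE; case: syll_trivialP. Qed.

Lemma merge_syllA v (a b c : G v) :
  merge_syll (existT _ v a) (existT _ v (gmul b c)) =
  merge_syll (existT _ v (gmul a b)) (existT _ v c).
Proof. by rewrite /merge_syll !syll_mulE gmulA. Qed.

Lemma size_merge_syll s t : size (merge_syll s t) <= 1.
Proof. by case: (merge_syll_cases s t) => [->|[-> _]]. Qed.

Lemma svert_inv (s : syl) : svert (syll_inv s) = svert s.
Proof. by case: s. Qed.

Lemma syll_invK (s : syl) : syll_inv (syll_inv s) = s.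
Proof. by case: s => v a; rewrite /syll_inv /= ginvK. Qed.

Lemma syll_trivial_inv (s : syl) : ~ syll_trivial s -> ~ syll_trivial (syll_inv s).
Proof. by case: s => v a; rewrite /syll_trivial /= => a1 /ginv_eq1. Qed.

Lemma word_inv_cat (a b : wrd) : word_inv (a ++ b) = word_inv b ++ word_inv a.
Proof. by rewrite /word_inv map_cat rev_cat. Qed.

Lemma word_inv_cons (s : syl) (w : wrd) : word_inv (s :: w) = word_inv w ++ [:: syll_inv s].
Proof. by rewrite /word_inv /= rev_cons cats1. Qed.

Lemma size_word_inv (w : wrd) : size (word_inv w) = size w.
Proof. by rewrite size_rev size_map. Qed.

Lemma word_invK (w : wrd) : word_inv (word_inv w) = w.
Proof. by rewrite /word_inv map_rev revK -map_comp (eq_map syll_invK) map_id. Qed.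

Lemma In_word_inv (s : syl) (w : wrd) :
  List.In s (word_inv w) -> exists2 t, List.In t w & s = syll_inv t.
Proof.
rewrite /word_inv => sw.
have /List.in_map_iff [t [<- wt]] : List.In s (map (@syll_inv V G) w).
  by apply/List.in_rev; rewrite List.rev_alt.
by exists t.
Qed.

Definition all_adjacent (v : V) (w : wrd) : bool := all (fun t => e v (svert t)) w.

Lemma all_adjacent_cat v a b :
  all_adjacent v (a ++ b) = all_adjacent v a && all_adjacent v b.
Proof. exact: all_cat. Qed.

Lemma all_adjacent_inv v (w : wrd) : all_adjacent v (word_inv w) = all_adjacent v w.
Proof. by rewrite /all_adjacent /word_inv all_rev all_map; apply: eq_all; case. Qed.

Lemma all_adjacent_merge_syll v s t : e v (svert s) -> all_adjacent v (merge_syll s t).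
Proof.
by case: (merge_syll_cases s t) => [->|[-> _]] //=; rewrite svert_syll_mul => ->.
Qed.

Lemma adjacent_svert_neq s t : e (svert s) (svert t) -> svert t != svert s.
Proof. by apply: contraTneq => ->; rewrite e_irr. Qed.

Lemma swap_move_adj (s t : syl) u w :
  e (svert s) (svert t) -> swap_move e (u ++ s :: t :: w) (u ++ t :: s :: w).
Proof. by case: s => v1 a; case: t => v2 b; apply: SwapM. Qed.

Lemma swap_move_sym (a b : wrd) : swap_move e a b -> swap_move e b a.
Proof. by case=> u w v1 v2 x y vv; apply: SwapM; rewrite e_sym. Qed.

Lemma swaps_sym a b : swaps a b -> swaps b a.
Proof.
elim=> [x y /swap_move_sym xy|x|x y z _ yx _ zy]; first exact: rt_step.
  exact: rt_refl.
exact: rt_trans zy yx.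
Qed.

Lemma swaps_catl c a b : swaps a b -> swaps (c ++ a) (c ++ b).
Proof.
elim=> [x y [u w v1 v2 p q vv]|x|x y z _ xy _ yz]; last exact: rt_trans xy yz.
  by apply: rt_step; rewrite !catA; apply: SwapM.
exact: rt_refl.
Qed.

Lemma swaps_catr c a b : swaps a b -> swaps (a ++ c) (b ++ c).
Proof.
elim=> [x y [u w v1 v2 p q vv]|x|x y z _ xy _ yz]; last exact: rt_trans xy yz.
  by apply: rt_step; rewrite -!catA; apply: SwapM.
exact: rt_refl.
Qed.

Lemma swaps_cons s a b : swaps a b -> swaps (s :: a) (s :: b).
Proof. exact: (swaps_catl [:: s]). Qed.

Lemma size_swaps a b : swaps a b -> size a = size b.
Proof.
elim=> [x y [u w v1 v2 p q _]|x|x y z _ -> _ ->] //.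
by rewrite !size_cat.
Qed.

Lemma swaps_In a b s : swaps a b -> List.In s a -> List.In s b.
Proof.
elim=> [x y [u w v1 v2 p q _]|x|x y z _ xy _ yz] //; last by auto.
rewrite !List.in_app_iff /=; tauto.
Qed.

Lemma swaps_pass s a b : all_adjacent (svert s) a -> swaps (s :: a ++ b) (a ++ s :: b).
Proof.
elim: a => [|t a IHa] /=; first by move=> _; apply: rt_refl.
move=> /andP [st sa]; apply: rt_trans (swaps_cons t (IHa sa)).
by apply: rt_step; apply: (swap_move_adj [::]).
Qed.

Lemma swaps_passl s a b : all_adjacent (svert s) a -> swaps (a ++ s :: b) (s :: a ++ b).
Proof. by move=> sa; apply/swaps_sym/swaps_pass. Qed.

Lemma swaps_passr s a : all_adjacent (svert s) a -> swaps (a ++ [:: s]) (s :: a).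
Proof. by move=> sa; have := swaps_passl [::] sa; rewrite cats0. Qed.

Lemma swaps_moves a b : swaps a b -> moves a b.
Proof.
elim=> [x y xy|x|x y z _ xy _ yz]; last exact: rt_trans xy yz.
  by apply: rt_step; left.
exact: rt_refl.
Qed.

Lemma move_catl (c a b : wrd) : move e a b -> move e (c ++ a) (c ++ b).
Proof.
by case=> [[u w v1 v2 x y vv]|[[u w v x y]|[u w v]]]; rewrite !catA;
  [left | right; left | right; right]; constructor.
Qed.

Lemma move_catr (c a b : wrd) : move e a b -> move e (a ++ c) (b ++ c).
Proof.
by case=> [[u w v1 v2 x y vv]|[[u w v x y]|[u w v]]]; rewrite -!catA /=;
  [left | right; left | right; right]; constructor.
Qed.

Lemma moves_catl c a b : moves a b -> moves (c ++ a) (c ++ b).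
Proof.
elim=> [x y /(move_catl c) xy|x|x y z _ xy _ yz]; last exact: rt_trans xy yz.
  exact: rt_step.
exact: rt_refl.
Qed.

Lemma moves_catr c a b : moves a b -> moves (a ++ c) (b ++ c).
Proof.
elim=> [x y /(move_catr c) xy|x|x y z _ xy _ yz]; last exact: rt_trans xy yz.
  exact: rt_step.
exact: rt_refl.
Qed.

Lemma move_inv (a b : wrd) : move e a b -> move e (word_inv a) (word_inv b).
Proof.
case=> [[u w v1 v2 x y vv]|[[u w v x y]|[u w v]]];
  rewrite !word_inv_cat !word_inv_cons -!catA /= /syll_inv /=.
- by left; constructor; rewrite e_sym.
- by rewrite ginvM; right; left; constructor.
- by rewrite ginv1; right; right; constructor.
Qed.

Lemma moves_inv a b : moves a b -> moves (word_inv a) (word_inv b).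
Proof.
elim=> [x y /move_inv xy|x|x y z _ xy _ yz]; last exact: rt_trans xy yz.
  exact: rt_step.
exact: rt_refl.
Qed.

Lemma moves_wequiv a b : moves a b -> wequiv e a b.
Proof.
elim=> [x y xy|x|x y z _ xy _ yz]; last exact: rst_trans xy yz.
  exact: rst_step.
exact: rst_refl.
Qed.

Lemma reduced_swaps (a b : wrd) : reduced e a -> swaps a b -> reduced e b.
Proof.
move=> ra ab w bw; rewrite -(size_swaps ab); apply: ra.
exact: rt_trans (swaps_moves ab) bw.
Qed.

Lemma reduced_cons (s : syl) (w : wrd) : reduced e (s :: w) -> reduced e w.
Proof. by move=> rsw w' /(moves_catl [:: s]) /rsw. Qed.

Lemma reduced_no_merge (w a : wrd) s t b : reduced e w -> swaps w (a ++ s :: t :: b) ->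
  svert s <> svert t.
Proof.
move=> rw ws; case: s ws => v x; case: t => u y /= ws uv; subst u.
have merge : moves (a ++ [:: existT _ v x, existT _ v y & b])
                   (a ++ existT _ v (gmul x y) :: b).
  by apply: rt_step; right; left; constructor.
by have := reduced_swaps rw ws merge; rewrite !size_cat /= !addnS ltnn.
Qed.

(** Left multiplication of a reduced word by a syllable *)

Fixpoint absorb (s : syl) (w : wrd) : option wrd :=
  if w is t :: w' then
    if svert t == svert s then Some (merge_syll s t ++ w')
    else if e (svert s) (svert t) then omap (cons t) (absorb s w') else None
  else None.

(* A reduced word for the product of [s] and [w], when [w] is reduced. *)
Definition lmul (s : syl) (w : wrd) : wrd :=
  if syll_trivialb s then w
  else if absorb s w is Some w' then w' else s :: w.

Definition nform (w : wrd) : wrd := foldr lmul [::] w.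

Fixpoint locally_reduced (w : wrd) : Prop :=
  if w is s :: w' then [/\ ~ syll_trivial s, absorb s w' = None & locally_reduced w']
  else True.

Lemma absorb_cat s a b : absorb s (a ++ b) =
  if absorb s a is Some a' then Some (a' ++ b)
  else if all_adjacent (svert s) a then omap (cat a) (absorb s b) else None.
Proof.
elim: a => [|t a IHa] /=; first by case: (absorb s b).
case: eqP => [_|_] /=; first by rewrite catA.
case: (e _ _) => //=; rewrite IHa; case: (absorb s a) => //=.
by case: (all_adjacent _ _) => //=; case: (absorb s b).
Qed.

Lemma absorbN_all_adjacent s a : all_adjacent (svert s) a -> absorb s a = None.
Proof.
elim: a => [|t a IHa] //= /andP [st sa].
by rewrite (negbTE (adjacent_svert_neq st)) st IHa.
Qed.

Lemma absorb_Some s w w' : absorb s w = Some w' ->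
  exists a t b, [/\ w = a ++ t :: b, all_adjacent (svert s) a, svert t = svert s &
                  w' = a ++ merge_syll s t ++ b].
Proof.
elim: w w' => [|t w IHw] w' //=.
case: eqP => [ts [<-]|_]; first by exists [::], t, w.
case st: (e _ _) => //; case sw: (absorb s w) => [w''|] //= [<-].
have [a [t' [b [-> sa t's ->]]]] := IHw _ sw.
by exists (t :: a), t', b; rewrite /= st sa.
Qed.

Lemma absorb_at s a t b : all_adjacent (svert s) a -> svert t = svert s ->
  absorb s (a ++ t :: b) = Some (a ++ merge_syll s t ++ b).
Proof. by move=> sa ts; rewrite absorb_cat absorbN_all_adjacent // sa /= ts eqxx. Qed.

Lemma absorb_cons_adj s t w : e (svert s) (svert t) ->
  absorb s (t :: w) = omap (cons t) (absorb s w).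
Proof. by move=> st /=; rewrite (negbTE (adjacent_svert_neq st)) st. Qed.

Lemma absorbN_svert s s' w : svert s = svert s' ->
  (absorb s w = None <-> absorb s' w = None).
Proof.
move=> ss'; elim: w => [|t w IHw] //=.
rewrite ss'; case: (_ == _) => //; case: (e _ _) => //.
by case: (absorb s w) IHw; case: (absorb s' w) => //= *; firstorder; congruence.
Qed.

Lemma size_absorb s w w' : absorb s w = Some w' -> size w' <= size w.
Proof.
move=> /absorb_Some [a [t [b [-> _ _ ->]]]].
by rewrite !size_cat /= leq_add2l -add1n leq_add2r size_merge_syll.
Qed.

Lemma absorb_moves s w w' : absorb s w = Some w' -> moves (s :: w) w'.
Proof.
elim: w w' => [|t w IHw] w' //=.
case: eqP => [ts [<-]|_].
  move: ts {IHw}; case: s => v a; case: t => u b /= uv; subst u.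
  have merge : moves [:: existT _ v a, existT _ v b & w] (existT _ v (gmul a b) :: w).
    by apply: rt_step; right; left; apply: (MergeM [::]).
  case: (classic (gmul a b = gone _)) => ab; last by rewrite merge_syll_nontrivial.
  rewrite merge_syll_trivial //; apply: rt_trans merge _; rewrite ab.
  by apply: rt_step; right; right; apply: (DeleteM [::]).
case st: (e _ _) => //; case sw: (absorb s w) => [w''|] //= [<-].
apply: rt_trans (moves_catl [:: t] (IHw _ sw)).
by apply: rt_step; left; apply: (swap_move_adj [::]); rewrite st.
Qed.

Lemma lmul_trivial s w : syll_trivial s -> lmul s w = w.
Proof. by rewrite /lmul; case: syll_trivialP. Qed.

Lemma lmul_blocked s w : ~ syll_trivial s -> absorb s w = None -> lmul s w = s :: w.
Proof. by rewrite /lmul => s1 ->; case: syll_trivialP. Qed.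

Lemma lmul_absorb s w w' : ~ syll_trivial s -> absorb s w = Some w' -> lmul s w = w'.
Proof. by rewrite /lmul => s1 ->; case: syll_trivialP. Qed.

Lemma lmul_at s a t b : ~ syll_trivial t -> all_adjacent (svert s) a ->
  svert t = svert s -> lmul s (a ++ t :: b) = a ++ merge_syll s t ++ b.
Proof.
move=> t1 sa ts; rewrite /lmul absorb_at //; case: syll_trivialP => // s1.
congr (_ ++ _); move: s t ts s1 t1 {sa} => [v x] [u y] /= uv; subst u.
by rewrite /syll_trivial /= => -> y1; rewrite merge_syll_nontrivial gmul1.
Qed.

Lemma lmul_moves s w : moves (s :: w) (lmul s w).
Proof.
rewrite /lmul; case: syll_trivialP => [|_].
  case: s => v a; rewrite /syll_trivial /= => ->.
  by apply: rt_step; right; right; apply: (DeleteM [::]).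
case sw: (absorb s w) => [w'|]; [exact: absorb_moves | exact: rt_refl].
Qed.

Lemma moves_nform w : moves w (nform w).
Proof.
elim: w => [|s w IHw] /=; first exact: rt_refl.
exact: rt_trans (moves_catl [:: s] IHw) (lmul_moves _ _).
Qed.

Lemma size_lmul s w : size (lmul s w) <= (size w).+1.
Proof.
rewrite /lmul; case: syll_trivialb => //; case sw: (absorb s w) => [w'|] //.
exact: leq_trans (size_absorb sw) _.
Qed.

Lemma size_nform w : size (nform w) <= size w.
Proof. by elim: w => [|s w IHw] //=; apply: leq_trans (size_lmul s _) _. Qed.

Lemma nform_cat a b : nform (a ++ b) = foldr lmul (nform b) a.
Proof. by rewrite /nform foldr_cat. Qed.

Lemma locally_reduced_catr a b : locally_reduced (a ++ b) -> locally_reduced b.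
Proof. by elim: a => [|s a IHa] //= [_ _ /IHa]. Qed.

Lemma locally_reduced_merge s t a b : svert s = svert t -> all_adjacent (svert t) a ->
  locally_reduced (a ++ t :: b) -> locally_reduced (a ++ merge_syll s t ++ b).
Proof.
move=> st; elim: a => [|x a IHa] /=.
  move=> _ [t1 tb rb]; case: (merge_syll_cases s t) => [->|[-> m1]] //=.
  by split=> //; apply/(absorbN_svert _ (s' := t)); rewrite ?svert_syll_mul.
move=> /andP [tx ta] [x1 xW ra]; split=> //; last exact: IHa.
have xt : e (svert x) (svert t) by rewrite e_sym.
move: xW; rewrite !absorb_cat; case: (absorb x a) => //; case: (all_adjacent _ _) => //.
rewrite absorb_cons_adj //; case: (merge_syll_cases s t) => [->|[-> _]].
  by case: (absorb x b).
rewrite /= svert_syll_mul st (negbTE (adjacent_svert_neq xt)) xt /=.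
by case: (absorb x b).
Qed.

Lemma locally_reduced_lmul s w : locally_reduced w -> locally_reduced (lmul s w).
Proof.
rewrite /lmul; case: syll_trivialP => // s1 rw.
case sw: (absorb s w) => [w'|] //.
have [a [t [b [wE sa ts ->]]]] := absorb_Some sw.
by move: rw; rewrite wE; apply: locally_reduced_merge; rewrite ?ts.
Qed.

Lemma locally_reduced_nform w : locally_reduced (nform w).
Proof. by elim: w => [|s w IHw] //=; apply: locally_reduced_lmul. Qed.

Lemma nform_id w : locally_reduced w -> nform w = w.
Proof.
elim: w => [|s w IHw] //= [s1 sw rw].
by rewrite IHw // /lmul sw; case: syll_trivialP.
Qed.

(** Invariance of the normal form *)

Lemma absorb_swap s x y w : e (svert x) (svert y) ->
  match absorb s (x :: y :: w), absorb s (y :: x :: w) with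
  | Some a, Some b => swaps a b | None, None => True | _, _ => False end.
Proof.
move=> xy /=.
have yx : svert y != svert x by apply: adjacent_svert_neq.
case: (eqVneq (svert x) (svert s)) => xs; case: (eqVneq (svert y) (svert s)) => ys.
- by move: yx; rewrite xs ys eqxx.
- rewrite -xs xy /=.
  case: (merge_syll_cases s x) => [->|[-> _]] /=; first exact: rt_refl.
  by apply: rt_step; apply: (swap_move_adj [::]); rewrite svert_syll_mul -xs.
- rewrite -ys e_sym xy /=.
  case: (merge_syll_cases s y) => [->|[-> _]] /=; first exact: rt_refl.
  by apply: rt_step; apply: (swap_move_adj [::]); rewrite svert_syll_mul -ys.
- case: (e (svert s) (svert x)); case: (e (svert s) (svert y)) => //=.
  by case: (absorb s w) => //= w'; apply: rt_step; apply: (swap_move_adj [::]).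
Qed.

Lemma lmul_swap_move s w w' : swap_move e w w' -> swaps (lmul s w) (lmul s w').
Proof.
case=> u r v1 v2 x y xy; rewrite /lmul; case: syll_trivialb.
  by apply: rt_step; constructor.
have swap_s : swaps (s :: u ++ [:: existT _ v1 x, existT _ v2 y & r])
                    (s :: u ++ [:: existT _ v2 y, existT _ v1 x & r]).
  by apply: rt_step; apply: (SwapM (s :: u)).
rewrite !absorb_cat; case: (absorb s u) => [u'|]; first by apply: rt_step; constructor.
case: (all_adjacent _ _) => //.
have := @absorb_swap s (existT _ v1 x) (existT _ v2 y) r xy.
by case: (absorb s _) => [a|]; case: (absorb s _) => [b|] //= /(swaps_catl u).
Qed.

Lemma lmul_swaps s w w' : swaps w w' -> swaps (lmul s w) (lmul s w').
Proof.
elim=> [x y /(lmul_swap_move s) xy|x|x y z _ xy _ yz]; last exact: rt_trans xy yz.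
  exact: xy.
exact: rt_refl.
Qed.

Lemma foldr_lmul_swaps u w w' : swaps w w' -> swaps (foldr lmul w u) (foldr lmul w' u).
Proof. by move=> ww'; elim: u => [|s u IHu] //=; apply: lmul_swaps. Qed.

Lemma lmul_merge v (a b : G v) w : locally_reduced w ->
  swaps (lmul (existT _ v a) (lmul (existT _ v b) w)) (lmul (existT _ v (gmul a b)) w).
Proof.
move=> rw.
case: (classic (b = gone _)) => b1.
  by rewrite (@lmul_trivial (existT _ v b)) // b1 gmulx1; apply: rt_refl.
case: (classic (a = gone _)) => a1.
  by rewrite (@lmul_trivial (existT _ v a)) // a1 gmul1; apply: rt_refl.
case bw: (absorb (existT _ v b) w) => [w'|]; last first.
  rewrite (lmul_blocked (s := existT _ v b) b1 bw) (@lmul_at _ [::] (existT _ v b)) //=.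
  case: (classic (gmul a b = gone _)) => ab1.
    rewrite merge_syll_trivial // (@lmul_trivial (existT _ v (gmul a b))) //.
    exact: rt_refl.
  rewrite merge_syll_nontrivial // lmul_blocked //; first exact: rt_refl.
  by apply/(absorbN_svert _ (s' := existT _ v b)).
have [A [[u c] [B [wE vA /= uv w'E]]]] := absorb_Some bw; subst u.
have [c1 cB _] : locally_reduced (existT _ v c :: B).
  by apply: (@locally_reduced_catr A); rewrite -wE.
rewrite (lmul_absorb (s := existT _ v b) b1 bw) w'E wE (@lmul_at _ A (existT _ v c)) //.
case: (classic (gmul b c = gone _)) => bc1.
  rewrite (merge_syll_trivial bc1) (@merge_syll_nontrivial v (gmul a b) c);
    last by rewrite -gmulA bc1 gmulx1.
  rewrite -gmulA bc1 gmulx1 lmul_blocked //; first exact: swaps_pass.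
  rewrite /= absorb_cat absorbN_all_adjacent // vA.
  by move: cB => /(absorbN_svert _ (s' := existT _ v a)) ->.
rewrite (merge_syll_nontrivial bc1) (@lmul_at _ A (existT _ v (gmul b c))) //=.
by rewrite merge_syllA; apply: rt_refl.
Qed.

Lemma lmul_commute_absorb s t w w' : e (svert s) (svert t) -> ~ syll_trivial s ->
  ~ syll_trivial t -> absorb t w = Some w' -> lmul s w' = lmul t (lmul s w).
Proof.
move=> st s1 t1 tw.
have ts : e (svert t) (svert s) by rewrite e_sym.
have lmul_ts : lmul t (s :: w) = s :: w'.
  by apply: lmul_absorb; rewrite // absorb_cons_adj // tw.
have [a [u [b [wE ta ut w'E]]]] := absorb_Some tw; subst w w'.
have su : e (svert s) (svert u) by rewrite ut.
have s_merge : all_adjacent (svert s) (merge_syll t u) by apply: all_adjacent_merge_syll.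
case sa: (absorb s a) => [a'|].
  have [a1 [u' [a2 [aE _ u's a'E]]]] := absorb_Some sa.
  have ta' : all_adjacent (svert t) a'.
    move: ta; rewrite aE a'E !all_adjacent_cat /= => /and3P [-> _ ->].
    by rewrite all_adjacent_merge_syll.
  rewrite (@lmul_absorb s (a ++ merge_syll t u ++ b) (a' ++ merge_syll t u ++ b)) //;
    last by rewrite absorb_cat sa.
  rewrite (@lmul_absorb s (a ++ u :: b) (a' ++ u :: b)) ?absorb_cat ?sa //.
  by rewrite (lmul_absorb t1 (absorb_at _ ta' ut)).
case sa': (all_adjacent (svert s) a); last first.
  have block m : absorb s (a ++ m) = None by rewrite absorb_cat sa sa'.
  by rewrite (lmul_blocked s1 (block _)) (lmul_blocked s1 (block _)) lmul_ts.
have pass_a m : absorb s (a ++ m) = omap (cat a) (absorb s m) by rewrite absorb_cat sa sa'.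
have pass_merge m :
    absorb s (merge_syll t u ++ m) = omap (cat (merge_syll t u)) (absorb s m).
  by rewrite absorb_cat absorbN_all_adjacent // s_merge.
case sb: (absorb s b) => [b'|].
  rewrite (@lmul_absorb s (a ++ u :: b) (a ++ u :: b')) //;
    last by rewrite pass_a absorb_cons_adj // sb.
  rewrite (lmul_absorb t1 (absorb_at _ ta ut)).
  by rewrite (@lmul_absorb s _ (a ++ merge_syll t u ++ b')) // pass_a pass_merge sb.
rewrite (@lmul_blocked s (a ++ u :: b)) // ?lmul_ts;
  last by rewrite pass_a absorb_cons_adj // sb.
by rewrite lmul_blocked // pass_a pass_merge sb.
Qed.

Lemma lmul_commute s t w : e (svert s) (svert t) ->
  swaps (lmul s (lmul t w)) (lmul t (lmul s w)).
Proof.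
move=> st; have ts : e (svert t) (svert s) by rewrite e_sym.
case: (classic (syll_trivial s)) => s1.
  by rewrite (lmul_trivial _ s1) (lmul_trivial _ s1); apply: rt_refl.
case: (classic (syll_trivial t)) => t1.
  by rewrite (lmul_trivial _ t1) (lmul_trivial _ t1); apply: rt_refl.
case tw: (absorb t w) => [w1|].
  by rewrite (lmul_absorb t1 tw) (lmul_commute_absorb st s1 t1 tw); apply: rt_refl.
case sw: (absorb s w) => [w2|].
  by rewrite (lmul_absorb s1 sw) (lmul_commute_absorb ts t1 s1 sw); apply: rt_refl.
rewrite (lmul_blocked t1 tw) (lmul_blocked s1 sw).
rewrite (@lmul_blocked s (t :: w)) ?absorb_cons_adj ?sw //.
rewrite (@lmul_blocked t (s :: w)) ?absorb_cons_adj ?tw //.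
by apply: rt_step; apply: (swap_move_adj [::]).
Qed.

Lemma nform_move w w' : move e w w' -> swaps (nform w) (nform w').
Proof.
case=> [[u r v1 v2 x y xy]|[[u r v x y]|[u r v]]]; rewrite !nform_cat;
  apply: foldr_lmul_swaps => /=.
- exact: lmul_commute.
- exact: lmul_merge (locally_reduced_nform r).
- by rewrite lmul_trivial //; apply: rt_refl.
Qed.

Lemma nform_moves w w' : moves w w' -> swaps (nform w) (nform w').
Proof.
elim=> [x y /nform_move xy|x|x y z _ xy _ yz]; last exact: rt_trans xy yz.
  exact: xy.
exact: rt_refl.
Qed.

Lemma nform_wequiv w w' : wequiv e w w' -> swaps (nform w) (nform w').
Proof.
elim=> [x y /nform_move xy|x|x y _ /swaps_sym xy|x y z _ xy _ yz] //;
  [exact: rt_refl | exact: rt_trans xy yz].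
Qed.

Lemma locally_reduced_reduced w : locally_reduced w -> reduced e w.
Proof.
move=> rw w' /nform_moves /size_swaps; rewrite nform_id // => ->.
exact: size_nform.
Qed.

Lemma reduced_locally_reduced w : reduced e w -> locally_reduced w.
Proof.
elim: w => [|s w IHw] // rsw; split; last exact/IHw/(reduced_cons rsw).
- case: s rsw => v a rsw; rewrite /syll_trivial /= => a1; subst a.
  have del : moves (existT _ v (gone (G v)) :: w) w.
    by apply: rt_step; right; right; apply: (DeleteM [::]).
  by have := rsw _ del; rewrite ltnn.
- case sw: (absorb s w) => [w'|] //.
  by have := leq_trans (rsw _ (absorb_moves sw)) (size_absorb sw); rewrite ltnn.
Qed.

Lemma locally_reduced_catl a b : locally_reduced (a ++ b) -> locally_reduced a.
Proof.
move=> /locally_reduced_reduced rab; apply: reduced_locally_reduced => w' /(moves_catr b).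
by move=> /rab; rewrite !size_cat leq_add2r.
Qed.

Lemma locally_reduced_swaps a b : locally_reduced a -> swaps a b -> locally_reduced b.
Proof.
by move=> /locally_reduced_reduced ra ab; apply/reduced_locally_reduced/(reduced_swaps ra).
Qed.

Lemma reduced_for_swaps_nform w r : reduced_for e w r -> swaps r (nform w).
Proof. by move=> [/reduced_locally_reduced/nform_id rr /nform_wequiv]; rewrite rr. Qed.

(** Splitting [h^-1 g] *)

Definition syll_pair := {v : V & (G v * G v)%type}.

Definition pair_left (k : syll_pair) : syl := existT _ (projT1 k) (projT2 k).1.
Definition pair_right (k : syll_pair) : syl := existT _ (projT1 k) (projT2 k).2.
Definition pair_ldiv (k : syll_pair) : syl :=
  existT _ (projT1 k) (gmul (ginv (projT2 k).1) (projT2 k).2).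

Definition pairwise_adjacent (pq : seq syll_pair) : bool :=
  pairwise (fun k k' : syll_pair => e (projT1 k) (projT1 k')) pq.

Definition splitting (g h x : wrd) (pq : seq syll_pair) (y z : wrd) : Prop :=
  [/\ swaps g (x ++ map pair_right pq ++ y), swaps h (x ++ map pair_left pq ++ z),
      swaps (foldr lmul g (word_inv h)) (word_inv z ++ map pair_ldiv pq ++ y)
    & pairwise_adjacent pq].

Lemma all_adjacent_map v (f : syll_pair -> syl) pq :
  (forall k, svert (f k) = projT1 k) ->
  all_adjacent v (map f pq) = all (fun k => e v (projT1 k)) pq.
Proof. by move=> fk; rewrite /all_adjacent all_map; apply: eq_all => k /=; rewrite fk. Qed.

Lemma splitting_blocked g h x pq y z c : ~ syll_trivial c ->
  absorb (syll_inv c) (word_inv z ++ map pair_ldiv pq ++ y) = None ->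
  splitting g h x pq y z -> splitting g (h ++ [:: c]) x pq y (z ++ [:: c]).
Proof.
move=> c1 blocked [gs hs hgs adj]; split=> //.
  by rewrite !catA; apply: swaps_catr; rewrite -catA.
rewrite !word_inv_cat /=; apply: rt_trans (lmul_swaps _ hgs) _.
by rewrite lmul_blocked //; [apply: rt_refl | apply: syll_trivial_inv].
Qed.

Lemma absorbN_inv_suffix w a z c : locally_reduced (w ++ [:: c]) ->
  swaps w (a ++ z) -> absorb (syll_inv c) (word_inv z) = None.
Proof.
move=> rwc wz; case zc: (absorb _ _) => [z'|] //; exfalso.
have [z1 [u [z2 [zE cz1 uc _]]]] := absorb_Some zc.
have zE' : z = word_inv z2 ++ syll_inv u :: word_inv z1.
  by rewrite -(word_invK z) zE word_inv_cat word_inv_cons -catA.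
apply: (@reduced_no_merge _ (a ++ word_inv z2) (syll_inv u) c (word_inv z1)
          (locally_reduced_reduced rwc)); last by rewrite svert_inv uc svert_inv.
apply: rt_trans (swaps_catr [:: c] wz) _; rewrite zE' -!catA /=.
apply/swaps_catl/swaps_catl/swaps_cons/swaps_passr.
by rewrite all_adjacent_inv -(svert_inv c).
Qed.

Lemma absorbN_ldiv w x pq z c : locally_reduced (w ++ [:: c]) ->
  swaps w (x ++ map pair_left pq ++ z) -> all_adjacent (svert c) z ->
  pairwise_adjacent pq -> absorb (syll_inv c) (map pair_ldiv pq) = None.
Proof.
move=> rwc wx zc adj; case mc: (absorb _ _) => [m'|] //; exfalso.
have [m1 [u [m2 [mE _ uc _]]]] := absorb_Some mc.
have [pq1 [k [pq2 [pqE _ uk _]]]] := map_eq_cat_cons mE.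
have kc : projT1 k = svert c by rewrite -(svert_inv c) -uc uk.
apply: (@reduced_no_merge _ (x ++ map pair_left pq1 ++ map pair_left pq2 ++ z)
          (pair_left k) c [::] (locally_reduced_reduced rwc)); last by rewrite /= kc.
apply: rt_trans (swaps_catr [:: c] wx) _; rewrite pqE map_cat -!catA /=.
apply/swaps_catl/swaps_catl.
have := @swaps_pass (pair_left k) (map pair_left pq2 ++ z) [:: c]; rewrite -!catA; apply.
rewrite all_adjacent_cat /= kc zc andbT all_adjacent_map //.
move: adj; rewrite /pairwise_adjacent pqE pairwise_cat /= => /and4P [_ _ + _].
by apply: sub_all => k' /=; rewrite kc.
Qed.

Lemma splitting_absorbed g h x pq y1 y2 z v (a b : G v) :
  a <> gone _ -> all_adjacent v (map pair_left pq ++ z) -> all_adjacent v y1 ->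
  splitting g h x pq (y1 ++ existT _ v b :: y2) z ->
  exists x' pq' z', splitting g (h ++ [:: existT _ v a]) x' pq' (y1 ++ y2) z'.
Proof.
move=> a1 vQz vy1 [gs hs hgs adj].
move: (vQz); rewrite all_adjacent_cat => /andP [vQ vz].
have vM : all_adjacent v (map pair_ldiv pq) by move: vQ; rewrite !all_adjacent_map.
have vP : all_adjacent v (map pair_right pq) by move: vQ; rewrite !all_adjacent_map.
have hc : swaps (h ++ [:: existT _ v a]) (x ++ map pair_left pq ++ z ++ [:: existT _ v a]).
  by rewrite !catA; apply: swaps_catr; rewrite -catA.
have hgc : swaps (foldr lmul g (word_inv (h ++ [:: existT _ v a])))
    (word_inv z ++ map pair_ldiv pq ++ y1 ++
       merge_syll (existT _ v (ginv a)) (existT _ v b) ++ y2).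
  rewrite word_inv_cat /=; apply: rt_trans (lmul_swaps _ hgs) _.
  rewrite (@lmul_absorb (existT _ v (ginv a)) _ (word_inv z ++ map pair_ldiv pq ++ y1 ++
             merge_syll (existT _ v (ginv a)) (existT _ v b) ++ y2)).
  - exact: rt_refl.
  - by move/ginv_eq1.
  - rewrite !catA absorb_at; first by rewrite -!catA.
      by rewrite /= !all_adjacent_cat all_adjacent_inv vz vM.
    by [].
case: (classic (b = a)) => [ba|ab].
  subst b; move: hgc; rewrite merge_syll_trivial ?gmulV // => hgc.
  exists (x ++ [:: existT _ v a]), pq, z; split=> //; rewrite -catA /=.
  - apply: rt_trans gs _; apply: swaps_catl; rewrite !catA; apply: swaps_passl.
    by rewrite all_adjacent_cat vP.
  - by apply: rt_trans hc _; apply: swaps_catl; rewrite catA; apply: swaps_passr.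
move: hgc; rewrite merge_syll_nontrivial => [hgc|/gmulV_eq1 //].
exists x, (pq ++ [:: existT _ v (a, b)]), z; split; rewrite ?map_cat -?catA /=.
- by apply: rt_trans gs _; apply/swaps_catl/swaps_catl/swaps_passl.
- by apply: rt_trans hc _; apply/swaps_catl/swaps_catl/swaps_passr.
- by apply: rt_trans hgc _; apply/swaps_catl/swaps_catl/swaps_passl.
- rewrite /pairwise_adjacent pairwise_cat allrel1r -/(pairwise_adjacent pq) adj !andbT.
  move: vM; rewrite all_adjacent_map // => vM.
  by apply: sub_all vM => k /=; rewrite e_sym.
Qed.

Lemma splitting_rcons g h x pq y z c : locally_reduced (h ++ [:: c]) ->
  splitting g h x pq y z -> exists x' pq' y' z', splitting g (h ++ [:: c]) x' pq' y' z'.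
Proof.
move=> rhc spl; case: (spl) => [_ hs _ adj].
have [c1 _ _] : locally_reduced [:: c] := locally_reduced_catr rhc.
have zN : absorb (syll_inv c) (word_inv z) = None.
  by apply: (absorbN_inv_suffix (a := x ++ map pair_left pq) rhc); rewrite -catA.
have blocked : absorb (syll_inv c) (word_inv z ++ map pair_ldiv pq ++ y) = None ->
    exists x' pq' y' z', splitting g (h ++ [:: c]) x' pq' y' z'.
  by move=> cL; exists x, pq, y, (z ++ [:: c]); apply: splitting_blocked.
rewrite absorb_cat zN all_adjacent_inv svert_inv in blocked.
case zc: (all_adjacent (svert c) z) blocked => blocked; last by apply: blocked.
rewrite absorb_cat (absorbN_ldiv rhc hs zc adj) svert_inv in blocked.
case mc: (all_adjacent (svert c) (map pair_ldiv pq)) blocked => blocked;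
  last by apply: blocked.
case yc: (absorb (syll_inv c) y) blocked => [y'|] blocked; last by apply: blocked.
have [y1 [[u b] [y2 [yE cy1 /= uc _]]]] := absorb_Some yc.
move: c rhc c1 zc mc uc cy1 {blocked zN yc} => [v a] rhc c1 zc mc /= uv cy1; subst u.
have vQz : all_adjacent v (map pair_left pq ++ z).
  by rewrite all_adjacent_cat zc andbT; move: mc; rewrite !all_adjacent_map.
rewrite yE in spl.
have [x' [pq' [z' spl']]] := splitting_absorbed c1 vQz cy1 spl.
by exists x', pq', (y1 ++ y2), z'.
Qed.

Lemma splitting_exists g h : locally_reduced h -> exists x pq y z, splitting g h x pq y z.
Proof.
elim/last_ind: h => [|h c IHh] rh.
  by exists [::], [::], g, [::]; split=> //; apply: rt_refl.
rewrite -cats1 in rh *.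
have [x [pq [y [z spl]]]] := IHh (locally_reduced_catl rh).
exact: splitting_rcons rh spl.
Qed.

Lemma tail_nform_suffix g pre suf d s : swaps (nform g) (pre ++ suf) ->
  List.In s suf -> size suf <= d -> tail e d g s.
Proof.
move=> gs ssuf sufd; exists (pre ++ suf); split.
  split; last first.
    by apply/rst_sym/moves_wequiv; apply: rt_trans (moves_nform g) (swaps_moves gs).
  exact/locally_reduced_reduced/(locally_reduced_swaps (locally_reduced_nform g) gs).
rewrite drop_cat size_cat; case: ifP => [_|_]; first by apply: List.in_or_app; right.
have -> : size pre + size suf - d - size pre = 0 by lia.
by rewrite drop0.
Qed.

Lemma splitting_tails g h x pq y z d : splitting (nform g) (nform h) x pq y z ->
  size z + size pq + size y <= d ->
  [/\ forall s, List.In s y -> tail e d g s,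
      forall t, List.In t z -> tail e d h t &
      forall k, List.In k pq -> tail e d h (pair_left k) /\ tail e d g (pair_right k)].
Proof.
move=> [gs hs _ _] size_d; split.
- by move=> s ys; rewrite catA in gs; apply: (tail_nform_suffix gs ys); lia.
- by move=> t zt; rewrite catA in hs; apply: (tail_nform_suffix hs zt); lia.
move=> k pqk; split.
  apply: (tail_nform_suffix hs); last by rewrite size_cat size_map; lia.
  by apply/List.in_or_app; left; apply: List.in_map.
apply: (tail_nform_suffix gs); last by rewrite size_cat size_map; lia.
by apply/List.in_or_app; left; apply: List.in_map.
Qed.

Lemma reduced_for_inv_cat g h r x pq y z :
  reduced_for e (word_inv h ++ g) r -> splitting (nform g) (nform h) x pq y z ->
  swaps r (word_inv z ++ map pair_ldiv pq ++ y).
Proof.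
move=> hgr [_ _ hgs _].
apply: rt_trans (reduced_for_swaps_nform hgr) _; apply: rt_trans _ hgs.
have m : moves (word_inv h ++ g) (word_inv (nform h) ++ nform g).
  exact: rt_trans (moves_catr g (moves_inv (moves_nform h))) (moves_catl _ (moves_nform g)).
have := nform_moves m.
by rewrite [nform (_ ++ nform g)]nform_cat (nform_id (locally_reduced_nform g)).
Qed.

End GraphProductWords.

Theorem mainTheorem6 (V : finType) (e : rel V) (G : V -> grp)
  (e_sym : symmetric e) (e_irr : irreflexive e)
  (g h r : word G) :
  reduced_for e (word_inv h ++ g) r ->
  let d := size r in
  forall s, List.In s r ->
    tail e d g s
    \/ (exists t, tail e d h t /\ s = syll_inv t)
    \/ (exists (v : V) (a b : G v),
          tail e d h (existT _ v a) /\ tail e d g (existT _ v b) /\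
          s = existT _ v (gmul (ginv a) b)).
Proof.
move=> hgr d s rs.
have [x [pq [y [z spl]]]] :=
  splitting_exists e_sym e_irr (nform e g) (locally_reduced_nform e_sym e_irr h).
have rxy := reduced_for_inv_cat e_sym e_irr hgr spl.
have size_d : size z + size pq + size y <= d.
  by rewrite /d (size_swaps rxy) !size_cat size_word_inv size_map addnA.
have [tail_y tail_z tail_pq] := splitting_tails e_sym e_irr spl size_d.
move: (swaps_In rxy rs); rewrite !List.in_app_iff.
case=> [/In_word_inv [t zt ->]|[/List.in_map_iff [[v [a b]] [<- pqk]]|ys]].
- by right; left; exists t; split; first apply: tail_z.
- by have [ha gb] := tail_pq _ pqk; right; right; exists v, a, b.
- by left; apply: tail_y.
Qed.
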